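(* Let $S$ be an $L$-theory extending $I\Sigma_1$ such that for some $K\in\mathbb{N}$, $S$ proves: for all $a,b,c$, if $a,b,c$ are pairwise coprime and $a+b=c$, then $c < K\,\mathrm{rad}(abc)^{1+1/3}$; and $S$ proves Catalan's conjecture for the definable exponential $x^y$, i.e., the only $x,y,a,b>1$ with $x^a - y^b = 1$ are $x=3$, $a=2$, $y=2$, $b=3$. Then the theory $S + \mathrm{Exp}'$ proves Catalan's conjecture for $e$: whenever $x,y \in B$ and $a,b \in A$ with $x,y,a,b>1$ and $e(x,a) - e(y,b) = 1$, then $x=3$, $a=2$, $y=2$, $b=3$.
   Context: $L = \langle 0,1,+,\cdot,\le\rangle$ and $L^e = \langle 0,1,+,\cdot,e,\le\rangle$ with $e$ a binary (possibly partial) function symbol. $I\Sigma_1$ is Robinson arithmetic plus induction for $\Sigma_1$-formulas; in it the usual exponential $x^y$ is $\Delta_1$-definable and every element has a unique prime factorization. $\mathrm{rad}(a)$ is the product of all primes dividing $a$, each taken once. Presburger arithmetic $\mathrm{Pr}$: $0 \ne z+1$; $x\neq 0 \to \exists z\,(x = z+1)$; $x+z=y+z\to x=y$; $x+0=x$; associativity and commutativity of $+$; $x\le y \leftrightarrow \exists z\,(x+z=y)$; and for each standard $0<n\in\mathbb{N}$, $\exists y\,(ny \le x < n(y+1))$. $\mathrm{Exp}'$ consists of the axioms for an $L^e$-structure $\langle \mathcal{B},e\rangle$: (e0) there is an $L$-substructure $\mathcal{A}$ of $\mathcal{B}$ (universe $A$) satisfying the axioms of $\mathrm{Pr}$ such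 that $e: B\times A\to B$; and for all $x\in B$, $y,z\in A$: (e1) $(x=1\vee y=0)\leftrightarrow e(x,y)=1$; (e2) $x\neq0\to e(x,y)\ne 0$; (e3) $e(x,1)=x$; (e4) $e(x,y+z)=e(x,y)\cdot e(x,z)$. *)

Record LStruct := {
  car :> Type;
  zero : car;
  one : car;
  add : car -> car -> car;
  mul : car -> car -> car;
  le : car -> car -> Prop
}.

Arguments zero {_}.
Arguments one {_}.
Arguments add {_} _ _.
Arguments mul {_} _ _.
Arguments le {_} _ _.

Definition lt {M : LStruct} (x y : M) : Prop := le x y /\ x <> y.

Fixpoint natmul {M : LStruct} (n : nat) (y : M) : M :=
  match n with
  | O => zero
  | S k => add (natmul k y) y
  end.

Definition numeral {M : LStruct} (n : nat) : M := natmul n one.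

Inductive term : Type :=
  | tvar : nat -> term
  | tzero : term
  | tone : term
  | tadd : term -> term -> term
  | tmul : term -> term -> term.

Inductive form : Type :=
  | feq : term -> term -> form
  | fle : term -> term -> form
  | fnot : form -> form
  | fand : form -> form -> form
  | f_or : form -> form -> form
  | fimp : form -> form -> form
  | fall : form -> form
  | fex : form -> form
  | fball : term -> form -> form   (* forall x <= t, phi  (t read outside the binder) *)
  | fbex : term -> form -> form.

Fixpoint isDelta0 (f : form) : Prop :=
  match f with
  | feq _ _ | fle _ _ => True
  | fnot g => isDelta0 g
  | fand g h | f_or g h | fimp g h => isDelta0 g /\ isDelta0 h
  | fall _ | fex _ => False
  | fball _ g | fbex _ g => isDelta0 g
  end.

Fixpoint isSigma1 (f : form) : Prop :=
  isDelta0 f \/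
  match f with
  | fex g => isSigma1 g
  | _ => False
  end.

Definition scons {M : LStruct} (x : M) (env : nat -> M) : nat -> M :=
  fun n => match n with O => x | S k => env k end.

Fixpoint teval {M : LStruct} (env : nat -> M) (t : term) : M :=
  match t with
  | tvar n => env n
  | tzero => zero
  | tone => one
  | tadd a b => add (teval env a) (teval env b)
  | tmul a b => mul (teval env a) (teval env b)
  end.

Fixpoint sat {M : LStruct} (env : nat -> M) (f : form) : Prop :=
  match f with
  | feq a b => teval env a = teval env b
  | fle a b => le (teval env a) (teval env b)
  | fnot g => ~ sat env g
  | fand g h => sat env g /\ sat env h
  | f_or g h => sat env g \/ sat env h
  | fimp g h => sat env g -> sat env h
  | fall g => forall x : M, sat (scons x env) g
  | fex g => exists x : M, sat (scons x env) g
  | fball t g => forall x : M, le x (teval env t) -> sat (scons x env) g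
  | fbex t g => exists x : M, le x (teval env t) /\ sat (scons x env) g
  end.

Definition RobinsonQ (M : LStruct) : Prop :=
  (forall x : M, zero <> add x one) /\
  (forall x y : M, add x one = add y one -> x = y) /\
  (forall x : M, x <> zero -> exists y : M, x = add y one) /\
  (forall x : M, add x zero = x) /\
  (forall x y : M, add x (add y one) = add (add x y) one) /\
  (forall x : M, mul x zero = zero) /\
  (forall x y : M, mul x (add y one) = add (mul x y) x) /\
  (forall x y : M, le x y <-> exists z : M, add x z = y).

(* induction on variable 0, all other variables are parameters *)
Definition Sigma1Induction (M : LStruct) : Prop :=
  forall phi : form, isSigma1 phi ->
  forall env : nat -> M,
    sat (scons zero env) phi ->
    (forall x : M, sat (scons x env) phi -> sat (scons (add x one) env) phi) ->
    forall x : M, sat (scons x env) phi.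

Definition ISigma1 (M : LStruct) : Prop := RobinsonQ M /\ Sigma1Induction M.

Definition divides {M : LStruct} (d n : M) : Prop := exists k : M, mul d k = n.

Definition coprime {M : LStruct} (a b : M) : Prop :=
  forall d : M, divides d a -> divides d b -> d = one.

Definition prime {M : LStruct} (p : M) : Prop :=
  lt one p /\ forall d : M, divides d p -> d = one \/ d = p.

(* rad n = r : r is the least positive divisor of n that is divisible by
   every prime divisor of n (i.e. the product of the distinct primes of n) *)
Definition isRad {M : LStruct} (n r : M) : Prop :=
  lt zero r /\ divides r n /\ (forall p : M, prime p -> divides p n -> divides p r) /\
  (forall s : M, lt zero s -> divides s n ->
     (forall p : M, prime p -> divides p n -> divides p s) -> le r s).

(* ABC with exponent 1+1/3 and constant K:  c < K rad(abc)^(4/3),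
   written without real exponents as  c^3 < K^3 * rad(abc)^4 *)
Definition ABC_4_3 (M : LStruct) (K : nat) : Prop :=
  forall a b c : M, lt zero a -> lt zero b -> lt zero c ->
    coprime a b -> coprime a c -> coprime b c -> add a b = c ->
    forall r : M, isRad (mul (mul a b) c) r ->
      lt (mul (mul c c) c) (natmul (K * K * K) (mul (mul r r) (mul r r))).

Definition CatalanFor {M : LStruct} (D : M -> Prop) (E : M -> M -> M) : Prop :=
  forall x y a b : M, D a -> D b ->
    lt one x -> lt one y -> lt one a -> lt one b ->
    E x a = add (E y b) one ->
    x = numeral 3 /\ a = numeral 2 /\ y = numeral 2 /\ b = numeral 3.

(* In a model of I Sigma_1 there is exactly one
   such function. Variables: 2 = x, 1 = y, 0 = z (graph: x^y = z). *)
Definition IsDefinableExp (M : LStruct) (E : M -> M -> M) : Prop :=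
  (exists phi : form, isSigma1 phi /\
     forall (env : nat -> M) (x y z : M),
       sat (scons z (scons y (scons x env))) phi <-> E x y = z) /\
  (forall x : M, E x zero = one) /\
  (forall x y : M, E x (add y one) = mul (E x y) x).

Definition CatalanExp (M : LStruct) : Prop :=
  forall E : M -> M -> M, IsDefinableExp M E -> CatalanFor (fun _ => True) E.

(* (e0): A is an L-substructure of B satisfying Presburger arithmetic
   (relativized to A, with the order of B), and e : B x A -> B *)
Definition LSubstructure {B : LStruct} (A : B -> Prop) : Prop :=
  A zero /\ A one /\
  (forall x y : B, A x -> A y -> A (add x y)) /\
  (forall x y : B, A x -> A y -> A (mul x y)).

Definition Presburger {B : LStruct} (A : B -> Prop) : Prop :=
  (forall z : B, A z -> zero <> add z one) /\
  (forall x : B, A x -> x <> zero -> exists z : B, A z /\ x = add z one) /\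
  (forall x y z : B, A x -> A y -> A z -> add x z = add y z -> x = y) /\
  (forall x : B, A x -> add x zero = x) /\
  (forall x y z : B, A x -> A y -> A z -> add x (add y z) = add (add x y) z) /\
  (forall x y : B, A x -> A y -> add x y = add y x) /\
  (forall x y : B, A x -> A y -> (le x y <-> exists z : B, A z /\ add x z = y)) /\
  (forall n : nat, 0 < n -> forall x : B, A x ->
     exists y : B, A y /\ le (natmul n y) x /\ lt x (natmul n (add y one))).

Definition ExpPrime (B : LStruct) (A : B -> Prop) (e : B -> B -> B) : Prop :=
  LSubstructure A /\ Presburger A /\
  (forall (x y : B), A y -> ((x = one \/ y = zero) <-> e x y = one)) /\
  (forall (x y : B), A y -> x <> zero -> e x y <> zero) /\
  (forall x : B, e x one = x) /\
  (forall (x y z : B), A y -> A z -> e x (add y z) = mul (e x y) (e x z)).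

From Stdlib Require Import Classical ClassicalEpsilon Lia Ring PeanoNat.

(* By Presburger division an exponent [a] in [A] is [N q + k] with [k < N] standard.
   If [q <> 0], then [e x a = X^N x^k] with [X = e x q], so [X] is divisible by every
   prime factor of [e x a] while [X^N <= e x a]: the radical of [e x a] is tiny and
   [e x a >= 2^N]. In a solution [e x a = e y b + 1], ABC for the triple
   [(e y b, 1, e x a)] then bounds [e x a] by a standard number below [2^N] once [N]
   is large, so both exponents are standard. For standard exponents [e] agrees with
   the [Sigma_1]-definable exponential, which exists in [I Sigma_1] (coding sequences
   with Goedel's beta function and the Chinese remainder theorem), and Catalan's
   conjecture for it applies. *)

Fixpoint trename (r : nat -> nat) (t : term) : term :=
  match t with
  | tvar n => tvar (r n)
  | tzero => tzero | tone => tone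
  | tadd a b => tadd (trename r a) (trename r b)
  | tmul a b => tmul (trename r a) (trename r b)
  end.

Definition up_ren (r : nat -> nat) : nat -> nat :=
  fun n => match n with O => O | S k => S (r k) end.

Fixpoint frename (r : nat -> nat) (f : form) : form :=
  match f with
  | feq a b => feq (trename r a) (trename r b)
  | fle a b => fle (trename r a) (trename r b)
  | fnot g => fnot (frename r g)
  | fand g h => fand (frename r g) (frename r h)
  | f_or g h => f_or (frename r g) (frename r h)
  | fimp g h => fimp (frename r g) (frename r h)
  | fall g => fall (frename (up_ren r) g)
  | fex g => fex (frename (up_ren r) g)
  | fball t g => fball (trename r t) (frename (up_ren r) g)
  | fbex t g => fbex (trename r t) (frename (up_ren r) g)
  end.

Definition tlift (t : term) : term := trename S t.

Section Semantics.
Context {M : LStruct}.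

Lemma teval_ext (e1 e2 : nat -> M) t :
  (forall n, e1 n = e2 n) -> teval e1 t = teval e2 t.
Proof. intro H; induction t; simpl; congruence. Qed.

Lemma sat_ext f : forall (e1 e2 : nat -> M),
  (forall n, e1 n = e2 n) -> (sat e1 f <-> sat e2 f).
Proof.
  induction f; intros e1 e2 H; simpl;
  try (rewrite (teval_ext e1 e2 t H));
  try (rewrite (teval_ext e1 e2 t0 H)); try tauto.
  - rewrite (IHf e1 e2 H); tauto.
  - rewrite (IHf1 e1 e2 H), (IHf2 e1 e2 H); tauto.
  - rewrite (IHf1 e1 e2 H), (IHf2 e1 e2 H); tauto.
  - rewrite (IHf1 e1 e2 H), (IHf2 e1 e2 H); tauto.
  - split; intros G x; apply (IHf (scons x e1) (scons x e2)); auto;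
      intros [|n]; simpl; auto.
  - split; intros [x G]; exists x; apply (IHf (scons x e1) (scons x e2)); auto;
      intros [|n]; simpl; auto.
  - split; intros G x Hx; apply (IHf (scons x e1) (scons x e2)); auto;
      intros [|n]; simpl; auto.
  - split; intros [x [Hx G]]; exists x; split; auto;
      apply (IHf (scons x e1) (scons x e2)); auto; intros [|n]; simpl; auto.
Qed.

Lemma teval_rename r (env : nat -> M) t :
  teval env (trename r t) = teval (fun n => env (r n)) t.
Proof. induction t; simpl; congruence. Qed.

Lemma sat_rename f : forall r (env : nat -> M),
  sat env (frename r f) <-> sat (fun n => env (r n)) f.
Proof.
  induction f; intros r env; simpl; rewrite ?teval_rename; try tauto.
  - rewrite IHf; tauto.
  - rewrite IHf1, IHf2; tauto.
  - rewrite IHf1, IHf2; tauto.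
  - rewrite IHf1, IHf2; tauto.
  - split; intros G x; specialize (G x); rewrite IHf in *;
      (eapply sat_ext; [|exact G]); intros [|n]; reflexivity.
  - split; intros [x G]; exists x; rewrite IHf in *;
      (eapply sat_ext; [|exact G]); intros [|n]; reflexivity.
  - split; intros G x Hx; specialize (G x Hx); rewrite IHf in *;
      (eapply sat_ext; [|exact G]); intros [|n]; reflexivity.
  - split; intros [x [Hx G]]; exists x; split; auto; rewrite IHf in *;
      (eapply sat_ext; [|exact G]); intros [|n]; reflexivity.
Qed.

Lemma teval_lift x (env : nat -> M) t : teval (scons x env) (tlift t) = teval env t.
Proof. unfold tlift; rewrite teval_rename; apply teval_ext; reflexivity. Qed.

End Semantics.

Lemma delta0_rename f : forall r, isDelta0 f -> isDelta0 (frename r f).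
Proof. induction f; simpl; intuition. Qed.

Definition flt (t u : term) : form := fand (fle t u) (fnot (feq t u)).
Definition fdvd (t u : term) : form := fbex u (feq (tmul (tlift t) (tvar 0)) (tlift u)).
Definition fprime (t : term) : form :=
  fand (flt tone t) (fball t (fimp (fdvd (tvar 0) (tlift t))
     (f_or (feq (tvar 0) tone) (feq (tvar 0) (tlift t))))).

Definition tmodulus (tD ti : term) : term := tadd tone (tmul (tadd ti tone) tD).
Definition fbeta (tc tD ti tv : term) : form :=
  fbex tc (fand (feq (tlift tc) (tadd (tmul (tvar 0) (tlift (tmodulus tD ti))) (tlift tv)))
              (flt (tlift tv) (tlift (tmodulus tD ti)))).

Definition crt_stage_form : form :=
  fex (fex (fand (fnot (feq (tvar 0) tzero))
   (fand (fball (tadd (tvar 3) tone)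
          (fimp (flt (tvar 3) (tvar 0))
            (fball (tvar 1)
              (fimp (fdvd (tvar 0) (tvar 2)) (fimp (fdvd (tvar 0) (tmodulus (tvar 9) (tvar 1))) (feq (tvar 0) tone))))))
   (fand (fball (tvar 2)
          (fimp (fle (tvar 0) (tadd (tvar 4) tone)) (fdvd (tmodulus (tvar 8) (tvar 0)) (tvar 1))))
   (fand (fball (tvar 2)
          (fimp (fle (tvar 0) (tvar 4))
            (fball (tvar 5)
              (fimp (fbeta (tvar 6) (tvar 7) (tvar 1) (tvar 0)) (fbeta (tvar 3) (tvar 9) (tvar 1) (tvar 0))))))
      (fimp (fle (tadd (tvar 3) tone) (tvar 2)) (fbeta (tvar 1) (tvar 7) (tadd (tvar 3) tone) (tvar 6)))))))).

Definition exp_form : form :=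
  fex (fex (fand (fbeta (tvar 1) (tvar 0) tzero tone)
    (fand (fball (tvar 3) (fimp (flt (tvar 0) (tvar 4))
       (fbex (tvar 2) (fand (fbeta (tvar 3) (tvar 2) (tvar 1) (tvar 0))
                           (fbeta (tvar 3) (tvar 2) (tadd (tvar 1) tone) (tmul (tvar 0) (tvar 6)))))))
     (fbeta (tvar 1) (tvar 0) (tvar 3) (tvar 2))))).

Section ISigma1Model.
Variable M : LStruct.
Hypothesis HI : ISigma1 M.

Declare Scope M_scope.
Local Notation "x + y" := (@add M x y) : M_scope.
Local Notation "x * y" := (@mul M x y) : M_scope.
Local Notation "0" := (@zero M) : M_scope.
Local Notation "1" := (@one M) : M_scope.
Local Notation "x <= y" := (@le M x y) : M_scope.
Local Notation "x < y" := (@lt M x y) : M_scope.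
Local Open Scope M_scope.

Lemma zero_neq_succ : forall x : M, 0 <> x + 1. Proof. apply HI. Qed.
Lemma succ_inj : forall x y : M, x + 1 = y + 1 -> x = y. Proof. apply HI. Qed.
Lemma pred_exists : forall x : M, x <> 0 -> exists y, x = y + 1. Proof. apply HI. Qed.
Lemma add_0_r : forall x : M, x + 0 = x. Proof. apply HI. Qed.
Lemma add_succ_r : forall x y : M, x + (y + 1) = (x + y) + 1. Proof. apply HI. Qed.
Lemma mul_0_r : forall x : M, x * 0 = 0. Proof. apply HI. Qed.
Lemma mul_succ_r : forall x y : M, x * (y + 1) = x * y + x. Proof. apply HI. Qed.
Lemma le_iff_add : forall x y : M, x <= y <-> exists z, x + z = y. Proof. apply HI. Qed.

Lemma sigma1_ind (phi : form) (env : nat -> M) (P : M -> Prop) :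
  isSigma1 phi -> (forall x, sat (scons x env) phi <-> P x) ->
  P 0 -> (forall x, P x -> P (x + 1)) -> forall x, P x.
Proof.
  intros Hs HP H0 HS x. apply HP. apply (proj2 HI phi Hs env).
  - apply HP; auto.
  - intros y Hy. apply HP. apply HS. apply HP. exact Hy.
Qed.

Definition env0 : nat -> M := fun _ => 0.

Ltac induct_sigma1 phi env := match goal with |- forall z, @?P z =>
  apply (sigma1_ind phi env P); [simpl; tauto | intro; simpl; reflexivity | |] end.

Lemma add_0_l : forall x : M, 0 + x = x.
Proof.
  induct_sigma1 (feq (tadd tzero (tvar 0)) (tvar 0)) env0.
  - apply add_0_r.
  - intros x H. rewrite add_succ_r, H. reflexivity.
Qed.

Lemma add_S_l : forall x y : M, (x + 1) + y = (x + y) + 1.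
Proof.
  intro x.
  induct_sigma1 (feq (tadd (tadd (tvar 1) tone) (tvar 0)) (tadd (tadd (tvar 1) (tvar 0)) tone)) (scons x env0).
  - rewrite !add_0_r. reflexivity.
  - intros y H. rewrite !add_succ_r, H. reflexivity.
Qed.

Lemma add_comm : forall x y : M, x + y = y + x.
Proof.
  intro x.
  induct_sigma1 (feq (tadd (tvar 1) (tvar 0)) (tadd (tvar 0) (tvar 1))) (scons x env0).
  - rewrite add_0_r, add_0_l. reflexivity.
  - intros y H. rewrite add_succ_r, add_S_l, H. reflexivity.
Qed.

Lemma add_assoc : forall x y z : M, x + (y + z) = (x + y) + z.
Proof.
  intros x y.
  induct_sigma1 (feq (tadd (tvar 2) (tadd (tvar 1) (tvar 0))) (tadd (tadd (tvar 2) (tvar 1)) (tvar 0)))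
    (scons y (scons x env0)).
  - rewrite !add_0_r. reflexivity.
  - intros z H. rewrite !add_succ_r, H. reflexivity.
Qed.

Lemma mul_0_l : forall x : M, 0 * x = 0.
Proof.
  induct_sigma1 (feq (tmul tzero (tvar 0)) tzero) env0.
  - apply mul_0_r.
  - intros x H. rewrite mul_succ_r, H, add_0_r. reflexivity.
Qed.

Lemma mul_S_l : forall x y : M, (x + 1) * y = x * y + y.
Proof.
  intro x.
  induct_sigma1 (feq (tmul (tadd (tvar 1) tone) (tvar 0)) (tadd (tmul (tvar 1) (tvar 0)) (tvar 0))) (scons x env0).
  - rewrite !mul_0_r, add_0_r. reflexivity.
  - intros y H. rewrite !mul_succ_r, H.
    rewrite <- !add_assoc. f_equal. rewrite !add_succ_r, (add_comm y x). reflexivity.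
Qed.

Lemma mul_comm : forall x y : M, x * y = y * x.
Proof.
  intro x.
  induct_sigma1 (feq (tmul (tvar 1) (tvar 0)) (tmul (tvar 0) (tvar 1))) (scons x env0).
  - rewrite mul_0_r, mul_0_l. reflexivity.
  - intros y H. rewrite mul_succ_r, mul_S_l, H. reflexivity.
Qed.

Lemma mul_add_r : forall x y z : M, x * (y + z) = x * y + x * z.
Proof.
  intros x y.
  induct_sigma1 (feq (tmul (tvar 2) (tadd (tvar 1) (tvar 0))) (tadd (tmul (tvar 2) (tvar 1)) (tmul (tvar 2) (tvar 0))))
    (scons y (scons x env0)).
  - rewrite add_0_r, mul_0_r, add_0_r. reflexivity.
  - intros z H. rewrite add_succ_r, !mul_succ_r, H, add_assoc. reflexivity.
Qed.

Lemma mul_assoc : forall x y z : M, x * (y * z) = (x * y) * z.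
Proof.
  intros x y.
  induct_sigma1 (feq (tmul (tvar 2) (tmul (tvar 1) (tvar 0))) (tmul (tmul (tvar 2) (tvar 1)) (tvar 0)))
    (scons y (scons x env0)).
  - rewrite !mul_0_r. reflexivity.
  - intros z H. rewrite !mul_succ_r, mul_add_r, H. reflexivity.
Qed.

Lemma mul_1_l : forall x : M, 1 * x = x.
Proof.
  intro x. rewrite <- (add_0_l 1), mul_S_l, mul_0_l, add_0_l. reflexivity.
Qed.

Lemma isigma1_semiring : @semi_ring_theory M 0 1 (@add M) (@mul M) eq.
Proof.
  constructor.
  - exact add_0_l.
  - exact add_comm.
  - exact add_assoc.
  - exact mul_1_l.
  - exact mul_0_l.
  - exact mul_comm.
  - exact mul_assoc.
  - intros x y z. rewrite !(mul_comm _ z). apply mul_add_r.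
Qed.

Add Ring Mring : isigma1_semiring.

Lemma add_cancel_r : forall x y z : M, x + z = y + z -> x = y.
Proof.
  intros x y.
  induct_sigma1 (fimp (feq (tadd (tvar 2) (tvar 0)) (tadd (tvar 1) (tvar 0))) (feq (tvar 2) (tvar 1)))
    (scons y (scons x env0)).
  - rewrite !add_0_r; auto.
  - intros z IH H. apply IH. apply succ_inj. rewrite <- !add_succ_r. exact H.
Qed.

Lemma add_cancel_l : forall x y z : M, z + x = z + y -> x = y.
Proof. intros x y z H. apply (add_cancel_r x y z). rewrite !(add_comm _ z). exact H. Qed.

Lemma add_eq_0 : forall x y : M, x + y = 0 -> x = 0 /\ y = 0.
Proof.
  intros x y H. destruct (classic (y = 0)) as [Hy|Hy].
  - subst. rewrite add_0_r in H. auto.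
  - destruct (pred_exists y Hy) as [z Hz]. subst. rewrite add_succ_r in H. symmetry in H. now apply zero_neq_succ in H.
Qed.

Lemma add_eq_self : forall x z : M, x + z = x -> z = 0.
Proof. intros x z H. apply (add_cancel_l z 0 x). rewrite add_0_r. exact H. Qed.

Lemma le_refl : forall x : M, x <= x.
Proof. intro x. apply le_iff_add. exists 0. apply add_0_r. Qed.

Lemma le_trans : forall x y z : M, x <= y -> y <= z -> x <= z.
Proof.
  intros x y z H1 H2. apply le_iff_add in H1 as [a Ha]. apply le_iff_add in H2 as [b Hb].
  apply le_iff_add. exists (a + b). subst. ring.
Qed.

Lemma le_antisym : forall x y : M, x <= y -> y <= x -> x = y.
Proof.
  intros x y H1 H2. apply le_iff_add in H1 as [a Ha]. apply le_iff_add in H2 as [b Hb].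
  subst. assert (a + b = 0) as H. { apply (add_eq_self x). rewrite <- Hb at 2. ring. }
  apply add_eq_0 in H as [-> _]. symmetry; apply add_0_r.
Qed.

Lemma le_0_l : forall x : M, 0 <= x.
Proof. intro x. apply le_iff_add. exists x. apply add_0_l. Qed.

Lemma le_add_r : forall x y : M, x <= x + y.
Proof. intros x y. apply le_iff_add. exists y. reflexivity. Qed.

Lemma le_add_l : forall x y : M, x <= y + x.
Proof. intros x y. rewrite add_comm. apply le_add_r. Qed.

Lemma le_0_eq : forall x : M, x <= 0 -> x = 0.
Proof. intros x H. apply le_antisym; auto using le_0_l. Qed.

Lemma le_total0 : forall y x : M, x <= y \/ y <= x.
Proof.
  intro y. 
  induct_sigma1 (f_or (fle (tvar 0) (tvar 1)) (fle (tvar 1) (tvar 0))) (scons y env0).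
  - left. apply le_0_l.
  - intros x [H|H].
    + apply le_iff_add in H as [z Hz]. destruct (classic (z = 0)) as [Hz0|Hz0].
      * subst. right. rewrite add_0_r. apply le_add_r.
      * destruct (pred_exists z Hz0) as [w Hw]. subst. left. apply le_iff_add. exists w. ring.
    + right. eapply le_trans; [exact H| apply le_add_r].
Qed.

Lemma le_total : forall x y : M, x <= y \/ y <= x.
Proof. intros x y. apply le_total0. Qed.

Lemma lt_iff_succ_le : forall x y : M, x < y <-> x + 1 <= y.
Proof.
  intros x y. unfold lt. split.
  - intros [H1 H2]. apply le_iff_add in H1 as [z Hz]. destruct (classic (z = 0)) as [Hz0|Hz0].
    + subst. rewrite add_0_r in H2. tauto.
    + destruct (pred_exists z Hz0) as [w Hw]. subst. apply le_iff_add. exists w. ring.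
  - intros H. apply le_iff_add in H as [z Hz]. split.
    + apply le_iff_add. exists (1 + z). rewrite <- Hz. ring.
    + intro E. rewrite <- E in Hz. apply (zero_neq_succ z). symmetry. rewrite add_comm.
      apply (add_eq_self x). rewrite add_assoc. exact Hz.
Qed.

Lemma lt_le : forall x y : M, x < y -> x <= y.
Proof. intros x y H. apply H. Qed.

Lemma not_le_lt : forall x y : M, ~ x <= y -> y < x.
Proof.
  intros x y H. split.
  - destruct (le_total x y); tauto.
  - intro E; subst; apply H; apply le_refl.
Qed.

Lemma lt_not_le : forall x y : M, x < y -> ~ y <= x.
Proof. intros x y [H1 H2] H3. apply H2. apply le_antisym; auto. Qed.

Lemma le_lt_dec : forall x y : M, x <= y \/ y < x.
Proof. intros x y. destruct (classic (x <= y)); auto using not_le_lt. Qed.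

Lemma lt_trichotomy : forall x y : M, x < y \/ x = y \/ y < x.
Proof.
  intros x y. destruct (le_lt_dec x y) as [H|H]; auto.
  destruct (classic (x = y)); auto. left; split; auto.
Qed.

Lemma lt_succ_r : forall x y : M, x < y + 1 <-> x <= y.
Proof.
  intros x y. rewrite lt_iff_succ_le. split; intro H.
  - apply le_iff_add in H as [z Hz]. apply le_iff_add. exists z. apply (add_cancel_r _ _ 1). rewrite <- Hz. ring.
  - apply le_iff_add in H as [z Hz]. apply le_iff_add. exists z. rewrite <- Hz. ring.
Qed.

Lemma not_lt_0 : forall x : M, ~ x < 0.
Proof. intros x [H1 H2]. apply H2. apply le_0_eq; auto. Qed.

Lemma lt_0_neq : forall x : M, 0 < x <-> x <> 0.
Proof.
  intro x. split.
  - intros [_ H] E. subst. auto.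
  - intro H. split; auto using le_0_l.
Qed.

Lemma le_lt_trans : forall x y z : M, x <= y -> y < z -> x < z.
Proof. intros x y z H1 H2. apply lt_iff_succ_le in H2. apply lt_iff_succ_le. eapply le_trans; [|exact H2].
  apply le_iff_add in H1 as [a Ha]. apply le_iff_add. exists a. rewrite <- Ha. ring. Qed.

Lemma lt_le_trans : forall x y z : M, x < y -> y <= z -> x < z.
Proof. intros x y z H1 H2. apply lt_iff_succ_le in H1. apply lt_iff_succ_le. eapply le_trans; eauto. Qed.

Lemma lt_trans : forall x y z : M, x < y -> y < z -> x < z.
Proof. intros x y z H1 H2. eapply lt_le_trans; eauto using lt_le. Qed.

Lemma le_add_mono : forall x y z w : M, x <= y -> z <= w -> x + z <= y + w.
Proof. intros x y z w H1 H2. apply le_iff_add in H1 as [a Ha]. apply le_iff_add in H2 as [b Hb].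
  apply le_iff_add. exists (a + b). subst. ring. Qed.

Lemma le_add_cancel : forall x y z : M, x + z <= y + z -> x <= y.
Proof. intros x y z H. apply le_iff_add in H as [a Ha]. apply le_iff_add. exists a.
  apply (add_cancel_r _ _ z). rewrite <- Ha. ring. Qed.

Lemma lt_add_cancel : forall x y z : M, x + z < y + z -> x < y.
Proof. intros x y z H. apply lt_iff_succ_le in H. apply lt_iff_succ_le. apply (le_add_cancel _ _ z).
  replace (x + 1 + z) with (x + z + 1) by ring. auto. Qed.

Lemma le_mul_mono : forall x y z w : M, x <= y -> z <= w -> x * z <= y * w.
Proof. intros x y z w H1 H2. apply le_iff_add in H1 as [a Ha]. apply le_iff_add in H2 as [b Hb].
  apply le_iff_add. exists (x * b + a * z + a * b). subst. ring. Qed.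

Lemma mul_eq_0 : forall x y : M, x * y = 0 -> x = 0 \/ y = 0.
Proof.
  intros x y H. destruct (classic (y = 0)) as [Hy|Hy]; auto.
  destruct (pred_exists y Hy) as [z Hz]. subst. rewrite mul_succ_r in H. apply add_eq_0 in H. tauto.
Qed.

Lemma le_neq0 : forall x : M, x <> 0 -> 1 <= x.
Proof. intros x H. destruct (pred_exists x H) as [y ->]. rewrite add_comm. apply le_add_r. Qed.

Lemma le_mul_r : forall x y : M, y <> 0 -> x <= x * y.
Proof. intros x y H. rewrite <- (mul_1_l x) at 1. rewrite (mul_comm 1 x).
  apply le_mul_mono; auto using le_refl, le_neq0. Qed.

Lemma le_mul_cancel : forall x y z : M, z <> 0 -> x * z <= y * z -> x <= y.
Proof.
  intros x y z Hz H. destruct (le_lt_dec x y) as [H1|H1]; auto.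
  apply lt_iff_succ_le in H1. exfalso.
  assert (Hle : (y + 1) * z <= x * z) by (apply le_mul_mono; auto using le_refl).
  assert (Hle2 : (y + 1) * z <= y * z) by (eapply le_trans; eauto).
  rewrite mul_S_l in Hle2. apply le_iff_add in Hle2 as [a Ha].
  rewrite <- add_assoc in Ha. apply add_eq_self in Ha. apply add_eq_0 in Ha. tauto.
Qed.

Lemma lt_mul_mono : forall x y z : M, z <> 0 -> x < y -> x * z < y * z.
Proof.
  intros x y z Hz H. destruct (le_lt_dec (y * z) (x * z)) as [H1|H1]; auto.
  apply le_mul_cancel in H1; auto. exfalso. eapply lt_not_le; eauto.
Qed.

Lemma lt_mul_cancel : forall x y z : M, x * z < y * z -> x < y.
Proof.
  intros x y z H. destruct (le_lt_dec y x) as [H1|H1]; auto.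
  exfalso. apply (lt_not_le _ _ H). apply le_mul_mono; auto using le_refl.
Qed.

Lemma one_neq_0 : (1 : M) <> 0.
Proof. rewrite <- (add_0_l 1). intro H. symmetry in H. exact (zero_neq_succ _ H). Qed.

Lemma lt_0_1 : (0 : M) < 1.
Proof. apply lt_0_neq. apply one_neq_0. Qed.

Lemma le_sub : forall x y : M, x <= y -> exists z, y = x + z.
Proof. intros x y H. apply le_iff_add in H as [z Hz]. eauto. Qed.

Lemma lt_sub : forall x y : M, x < y -> exists z, y = x + z + 1.
Proof. intros x y H. apply lt_iff_succ_le in H. apply le_iff_add in H as [z Hz]. exists z. rewrite <- Hz. ring. Qed.

Lemma sat_lt (env : nat -> M) t u : sat env (flt t u) <-> teval env t < teval env u.
Proof. unfold flt, lt. simpl. tauto. Qed.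

Lemma le_k_mul : forall d k : M, d <> 0 -> k <= d * k.
Proof. intros d k H. rewrite mul_comm. apply le_mul_r; auto. Qed.

Lemma sat_div (env : nat -> M) t u : sat env (fdvd t u) <-> divides (teval env t) (teval env u).
Proof.
  unfold fdvd. cbn [sat teval scons]. setoid_rewrite teval_lift. split.
  - intros [k [_ Hk]]. exists k. exact Hk.
  - intros [k Hk]. destruct (classic (teval env t = 0)) as [H0|H0].
    + exists 0. rewrite H0 in *. rewrite mul_0_l in Hk. rewrite <- Hk, mul_0_r. split; auto using le_refl.
    + exists k. split; auto. rewrite <- Hk. apply le_k_mul; auto.
Qed.

Lemma div_le : forall d n : M, divides d n -> n <> 0 -> d <= n.
Proof.
  intros d n [k Hk] Hn. subst. destruct (classic (k = 0)) as [ -> |Hk]. 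
  - rewrite mul_0_r in Hn. tauto.
  - apply le_mul_r; auto.
Qed.

Lemma sat_prime (env : nat -> M) t : sat env (fprime t) <-> prime (teval env t).
Proof.
  unfold fprime. cbn [sat]. rewrite sat_lt. unfold prime. cbn [teval].
  split; intros [H1 H2]; split; auto.
  - intros d Hd. assert (Hp : teval env t <> 0).
    { intro E. rewrite E in H1. eapply not_lt_0. exact H1. }
    specialize (H2 d (div_le _ _ Hd Hp)). cbn [sat] in H2.
    rewrite sat_div in H2. cbn [teval scons] in H2. rewrite !teval_lift in H2.
    destruct (H2 Hd) as [E|E]; auto.
  - intros d _. cbn [sat]. rewrite sat_div. cbn [teval scons]. rewrite !teval_lift.
    intro Hd. destruct (H2 d Hd); auto.
Qed.

Lemma delta0_least (phi : form) (env : nat -> M) (P : M -> Prop) :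
  isDelta0 phi -> (forall x, sat (scons x env) phi <-> P x) ->
  forall a, P a -> exists m, P m /\ forall y, P y -> m <= y.
Proof.
  intros Hd HP a Ha. apply NNPP. intro Hno.
  assert (G : forall x y, y <= x -> ~ P y).
  { apply (sigma1_ind (fball (tvar 0) (fnot (frename (up_ren S) phi))) env (fun x => forall y, y <= x -> ~ P y)).
    - left. simpl. apply delta0_rename. exact Hd.
    - intro x. cbn [sat teval scons]. split; intros G y Hy; specialize (G y Hy).
      + intro Py. apply G. apply sat_rename. apply HP in Py.
        eapply sat_ext; [|exact Py]. intros [|n]; reflexivity.
      + intro Hs. apply G. rewrite sat_rename in Hs. apply HP.
        eapply sat_ext; [|exact Hs]. intros [|n]; reflexivity.
    - intros y Hy Py. apply le_0_eq in Hy. subst. apply Hno. exists 0. split; auto using le_0_l.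
    - intros x IH y Hy Py. destruct (le_lt_dec y x) as [H1|H1].
      + exact (IH y H1 Py).
      + assert (y = x + 1) as ->.
        { apply le_antisym; [exact Hy | exact (proj1 (lt_iff_succ_le x y) H1)]. }
        apply Hno. exists (x + 1). split; auto.
        intros z Pz. destruct (le_lt_dec (x + 1) z) as [H2|H2]; auto.
        apply lt_succ_r in H2. exfalso. exact (IH z H2 Pz). }
  exact (G a a (le_refl a) Ha).
Qed.

Lemma divmod_exists : forall m : M, m <> 0 -> forall x : M, exists q r, x = q * m + r /\ r < m.
Proof.
  intros m Hm.
  induct_sigma1 (fex (fex (fand (feq (tvar 2) (tadd (tmul (tvar 1) (tvar 3)) (tvar 0))) (flt (tvar 0) (tvar 3)))))
    (scons m env0).
  - exists 0, 0. split. ring. apply lt_0_neq; auto.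
  - intros x [q [r [-> Hr]]]. destruct (classic (r + 1 = m)) as [E|E].
    + exists (q + 1), 0. split. rewrite <- E. ring. apply lt_0_neq; auto.
    + exists q, (r + 1). split. ring. split; [exact (proj1 (lt_iff_succ_le r m) Hr) | exact E].
Qed.

Lemma divmod_unique : forall m q1 r1 q2 r2 : M,
  q1 * m + r1 = q2 * m + r2 -> r1 < m -> r2 < m -> q1 = q2 /\ r1 = r2.
Proof.
  assert (K : forall m q1 r1 q2 r2 : M, q1 * m + r1 = q2 * m + r2 -> r1 < m -> q1 < q2 -> False).
  { intros m q1 r1 q2 r2 E H1 H2. apply lt_sub in H2 as [k ->].
    assert (r1 = (k + 1) * m + r2) as E2.
    { apply (add_cancel_l _ _ (q1 * m)). rewrite E. ring. }
    apply (lt_not_le _ _ H1). rewrite E2. eapply le_trans; [|apply le_add_r].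
    rewrite mul_S_l. apply le_add_l. }
  intros m q1 r1 q2 r2 E H1 H2.
  destruct (lt_trichotomy q1 q2) as [L|[L|L]].
  - exfalso; eauto.
  - subst. split; auto. eapply add_cancel_l; eauto.
  - exfalso. symmetry in E. eauto.
Qed.

Lemma div_refl : forall a : M, divides a a.
Proof. intro a. exists 1. ring. Qed.

Lemma div_0 : forall a : M, divides a 0.
Proof. intro a. exists 0. apply mul_0_r. Qed.

Lemma div_trans : forall a b c : M, divides a b -> divides b c -> divides a c.
Proof. intros a b c [k Hk] [l Hl]. exists (k * l). subst. ring. Qed.

Lemma div_mul_r : forall a b c : M, divides a b -> divides a (b * c).
Proof. intros a b c [k Hk]. exists (k * c). subst. ring. Qed.

Lemma div_mul_l : forall a b c : M, divides a b -> divides a (c * b).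
Proof. intros a b c H. rewrite mul_comm. apply div_mul_r; auto. Qed.

Lemma div_mul_mono : forall a b c d : M, divides a b -> divides c d -> divides (a * c) (b * d).
Proof. intros a b c d [k Hk] [l Hl]. exists (k * l). subst. ring. Qed.

Lemma div_sub : forall a b c : M, divides a (b + c) -> divides a b -> divides a c.
Proof.
  intros a b c [k Hk] [l Hl]. destruct (classic (a = 0)) as [ -> |Ha].
  - rewrite mul_0_l in *. subst. symmetry in Hk. rewrite add_0_l in Hk. subst. apply div_0.
  - assert (l <= k). { apply (le_mul_cancel _ _ a); auto. rewrite !(mul_comm _ a). rewrite Hk, Hl. apply le_add_r. }
    apply le_sub in H as [j ->]. exists j. apply (add_cancel_l _ _ b). rewrite <- Hk, <- Hl. ring.
Qed.

Lemma div_one : forall d : M, divides d 1 -> d = 1.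
Proof.
  intros d Hd. apply le_antisym.
  - apply div_le; auto using one_neq_0.
  - apply le_neq0. intro E. subst. destruct Hd as [k Hk]. rewrite mul_0_l in Hk. apply one_neq_0. auto.
Qed.

Lemma lt_1_neq : forall p : M, 1 < p -> p <> 0 /\ p <> 1.
Proof.
  intros p H. split.
  - intro E. subst. eapply not_lt_0; eauto.
  - intro E. subst. destruct H; auto.
Qed.

Lemma prime_neq : forall p : M, prime p -> p <> 0 /\ p <> 1.
Proof. intros p [H _]. apply lt_1_neq; auto. Qed.

Lemma prime_div_mul : forall p a b : M, prime p -> divides p (a * b) -> divides p a \/ divides p b.
Proof.
  intros p a b Hp Hab. destruct (prime_neq p Hp) as [Hp0 Hp1].
  destruct (delta0_least (fand (fnot (feq (tvar 0) tzero)) (fdvd (tvar 1) (tmul (tvar 0) (tvar 2))))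
    (scons p (scons b env0)) (fun n => n <> 0 /\ divides p (n * b))) with (a := p)
    as [m [[Hm0 Hm] Hmin]].
  - simpl; tauto.
  - intro x. cbn [sat]. rewrite sat_div. cbn [teval scons]. tauto.
  - split; auto. apply div_mul_r, div_refl.
  - assert (Gen : forall z, divides p (z * b) -> divides m z).
    { intros z Hz. destruct (divmod_exists m Hm0 z) as [q [r [Ez Hr]]].
      destruct (classic (r = 0)) as [ -> |Hr0].
      - exists q. rewrite Ez. ring.
      - exfalso. assert (divides p (r * b)).
        { apply (div_sub _ (q * (m * b))). rewrite Ez in Hz.
          replace (q * (m * b) + r * b) with ((q * m + r) * b) by ring. auto.
          apply div_mul_l; auto. }
        apply (lt_not_le _ _ Hr). apply Hmin. split; auto. }
    assert (Hmp : divides m p) by (apply Gen; apply div_mul_r, div_refl).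
    destruct (proj2 Hp m Hmp) as [ -> | -> ].
    + right. rewrite mul_1_l in Hm. exact Hm.
    + left. apply Gen. exact Hab.
Qed.

Lemma prime_divisor_exists : forall e : M, e <> 0 -> e <> 1 -> exists p, prime p /\ divides p e.
Proof.
  intros e He0 He1.
  destruct (delta0_least (fand (flt tone (tvar 0)) (fdvd (tvar 0) (tvar 1))) (scons e env0)
     (fun d => 1 < d /\ divides d e)) with (a := e) as [d [[Hd1 Hde] Hmin]].
  - simpl; tauto.
  - intro x. cbn [sat]. rewrite sat_lt, sat_div. cbn [teval scons]. tauto.
  - split; [|apply div_refl]. split; [apply le_neq0; auto|auto].
  - exists d. split; auto. split; auto. intros d' Hd'.
    destruct (lt_1_neq d Hd1) as [Hd0 _].
    destruct (classic (d' = 1)); auto. destruct (classic (d' = d)); auto.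
    exfalso. assert (d' <> 0).
    { intro E. subst. destruct Hd' as [k Hk]. rewrite mul_0_l in Hk. auto. }
    assert (d <= d').
    { apply Hmin. split. split; auto. apply le_neq0; auto. eapply div_trans; eauto. }
    apply H0. apply le_antisym; auto. apply div_le; auto.
Qed.

Lemma coprime_mul : forall a b c : M, coprime a c -> coprime b c -> coprime (a * b) c.
Proof.
  intros a b c Ha Hb d Hd1 Hd2. apply NNPP. intro Hne.
  destruct (classic (d = 0)) as [ -> |Hd0].
  - destruct Hd2 as [k Hk]. rewrite mul_0_l in Hk. subst.
    assert (a = 1) by (apply Ha; [apply div_refl|apply div_0]).
    assert (b = 1) by (apply Hb; [apply div_refl|apply div_0]).
    subst. destruct Hd1 as [k2 Hk2]. rewrite mul_0_l in Hk2. apply one_neq_0. rewrite Hk2. ring.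
  - destruct (prime_divisor_exists d Hd0 Hne) as [p [Hp Hpd]].
    destruct (prime_neq p Hp) as [_ Hp1].
    destruct (prime_div_mul p a b Hp (div_trans _ _ _ Hpd Hd1)) as [H|H].
    + apply Hp1. apply Ha; [exact H | exact (div_trans _ _ _ Hpd Hd2)].
    + apply Hp1. apply Hb; [exact H | exact (div_trans _ _ _ Hpd Hd2)].
Qed.

Lemma coprime_1 : forall a : M, coprime a 1.
Proof. intros a d _ H. apply div_one; auto. Qed.

Lemma coprime_S : forall a : M, coprime a (a + 1).
Proof. intros a d H1 H2. apply div_one. eapply div_sub; eauto. Qed.

Lemma rad_exists : forall n : M, n <> 0 -> exists r, isRad n r.
Proof.
  intros n Hn.
  destruct (delta0_least (fand (fnot (feq (tvar 0) tzero)) (fand (fdvd (tvar 0) (tvar 1))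
      (fball (tvar 1) (fimp (fprime (tvar 0)) (fimp (fdvd (tvar 0) (tvar 2)) (fdvd (tvar 0) (tvar 1)))))))
      (scons n env0)
      (fun s => s <> 0 /\ divides s n /\ forall p, p <= n -> prime p -> divides p n -> divides p s))
    with (a := n) as [r [[Hr0 [Hrn Hrp]] Hmin]].
  - simpl; tauto.
  - intro x. cbn [sat]. setoid_rewrite sat_prime. setoid_rewrite sat_div. cbn [teval scons]. reflexivity.
  - split; auto. split; [apply div_refl|]. intros; assumption.
  - exists r. split; [apply lt_0_neq; auto|]. split; auto. split.
    + intros p Hp Hpn. apply Hrp; auto. apply div_le; auto.
    + intros s Hs Hsn Hsp. apply Hmin. split; [apply lt_0_neq; auto|]. split; auto.
Qed.

Lemma le_succ_cases : forall x y : M, x <= y + 1 -> x <= y \/ x = y + 1.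
Proof.
  intros x y H. destruct (classic (x = y + 1)); auto. left. apply lt_succ_r. split; auto.
Qed.

Definition modulus (D i : M) : M := 1 + (i + 1) * D.
Definition godel_beta (c D i v : M) : Prop := exists q, c = q * modulus D i + v /\ v < modulus D i.

Lemma modulus_neq0 : forall D i, modulus D i <> 0.
Proof. intros D i E. unfold modulus in E. rewrite add_comm in E. symmetry in E. exact (zero_neq_succ _ E). Qed.

Lemma teval_tmodulus (env : nat -> M) tD ti : teval env (tmodulus tD ti) = modulus (teval env tD) (teval env ti).
Proof. reflexivity. Qed.

Lemma sat_fbeta (env : nat -> M) tc tD ti tv :
  sat env (fbeta tc tD ti tv) <-> godel_beta (teval env tc) (teval env tD) (teval env ti) (teval env tv).
Proof.
  unfold fbeta. cbn [sat]. setoid_rewrite sat_lt. cbn [teval scons]. setoid_rewrite teval_lift.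
  rewrite teval_tmodulus. unfold godel_beta. split.
  - intros [q [_ H]]. exists q. exact H.
  - intros [q [Hq Hv]]. exists q. split; [|split; auto]. rewrite Hq.
    eapply le_trans; [|apply le_add_r]. apply le_mul_r. apply modulus_neq0.
Qed.

Lemma godel_beta_functional : forall c D i v v', godel_beta c D i v -> godel_beta c D i v' -> v = v'.
Proof.
  intros c D i v v' [q [E1 H1]] [q' [E2 H2]]. rewrite E1 in E2.
  apply (divmod_unique _ _ _ _ _ E2 H1 H2).
Qed.

Lemma godel_beta_total : forall c D i, exists v, godel_beta c D i v.
Proof.
  intros c D i. destruct (divmod_exists (modulus D i) (modulus_neq0 D i) c) as [q [r [E H]]].
  exists r, q. auto.
Qed.

Lemma godel_beta_le : forall c D i v, godel_beta c D i v -> v <= c.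
Proof. intros c D i v [q [E _]]. rewrite E. apply le_add_l. Qed.

Lemma godel_beta_small : forall D i v, v < modulus D i -> godel_beta v D i v.
Proof. intros D i v H. exists 0. split; auto. ring. Qed.

Lemma godel_beta_shift : forall c D i v t P, godel_beta c D i v -> divides (modulus D i) P -> godel_beta (c + t * P) D i v.
Proof.
  intros c D i v t P [q [E H]] [k Hk]. exists (q + t * k). split; auto.
  rewrite E, <- Hk. ring.
Qed.

Lemma godel_beta_intro : forall c D i v q, c = q * modulus D i + v -> v < modulus D i -> godel_beta c D i v.
Proof. intros. exists q. auto. Qed.

Ltac satsimp := cbn [sat]; repeat first [setoid_rewrite sat_div | setoid_rewrite sat_lt
   | setoid_rewrite sat_fbeta | setoid_rewrite sat_prime]; cbn [teval scons].

Ltac induct_sigma1_sat phi env := match goal with |- forall z, @?P z =>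
  apply (sigma1_ind phi env P); [simpl; tauto | intro; satsimp; reflexivity | |] end.

Section ModInverse.
Variables P m : M.
Hypothesis Hm0 : m <> 0.

Definition residue (g : M) : Prop := exists s q, s * P = q * m + g.

Lemma residue_bounded g : g < m -> residue g ->
  exists s q, s <= m /\ q <= s * P /\ s * P = q * m + g.
Proof.
  intros Hg [s [q E]].
  destruct (divmod_exists m Hm0 s) as [s1 [s2 [Es Hs2]]].
  destruct (divmod_exists m Hm0 (s2 * P)) as [q2 [g2 [Eq2 Hg2]]].
  assert (q * m + g = (s1 * P + q2) * m + g2) as E3.
  { rewrite <- E, Es. replace ((s1 * m + s2) * P) with (s1 * P * m + s2 * P) by ring.
    rewrite Eq2. ring. }
  destruct (divmod_unique _ _ _ _ _ E3 Hg Hg2) as [_ <-].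
  exists s2, q2. split; [apply lt_le; auto|]. split; auto.
  rewrite Eq2. eapply le_trans; [|apply le_add_r]. apply le_mul_r; auto.
Qed.

(* Multiplying by [m - 1] negates residues modulo [m]. *)
Lemma residue_mod_m g k r : residue g -> m = k * g + r -> k * g <> 0 -> residue r.
Proof.
  intros [s [q Hsq]] Em Hkg0.
  destruct (pred_exists m Hm0) as [m1 Hm1e]. destruct (pred_exists _ Hkg0) as [kap Hkap].
  assert (Hm1k : m1 = kap + r).
  { apply (add_cancel_r _ _ 1). rewrite <- Hm1e, Em, Hkap. ring. }
  exists (m1 * k * s), (k * q * m1 + kap).
  replace (m1 * k * s * P) with (m1 * k * (s * P)) by ring. rewrite Hsq.
  replace (m1 * k * (q * m + g)) with (m1 * k * q * m + m1 * (k * g)) by ring.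
  rewrite Hkap, Hm1e, Hm1k. ring.
Qed.

Lemma residue_mod_P g k r : residue g -> P = k * g + r -> residue r.
Proof.
  intros [s [q Hsq]] EP. destruct (pred_exists m Hm0) as [m1 Hm1e].
  exists (1 + m1 * k * s), (k * q * m1 + k * g).
  replace ((1 + m1 * k * s) * P) with (P + m1 * k * (s * P)) by ring. rewrite Hsq.
  rewrite EP at 1. rewrite Hm1e. ring.
Qed.

Lemma least_residue_divides g : g <> 0 -> g < m -> residue g ->
  (forall r, r <> 0 -> r < m -> residue r -> g <= r) -> divides g m /\ divides g P.
Proof.
  intros Hg0 Hgm Hg Hmin.
  assert (Hrem : forall z, (forall k r, z = k * g + r -> r < g -> r <> 0 -> residue r) -> divides g z).
  { intros z Hz. destruct (divmod_exists g Hg0 z) as [k [r [Ez Hr]]].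
    destruct (classic (r = 0)) as [Hr0|Hr0].
    - exists k. rewrite Ez, Hr0. ring.
    - exfalso. apply (lt_not_le _ _ Hr). apply Hmin; eauto. eapply lt_trans; eauto. }
  split; apply Hrem; intros k r Ez Hr Hr0.
  - apply (residue_mod_m g k r); auto. intro E. rewrite E, add_0_l in Ez. subst r.
    apply (lt_not_le _ _ Hgm). apply lt_le. exact Hr.
  - apply (residue_mod_P g k r); auto.
Qed.

Lemma mod_inverse_exists : m <> 1 -> coprime P m -> residue 1.
Proof.
  intros Hm1 Hcop.
  destruct (divmod_exists m Hm0 P) as [q0 [g0 [EP0 Hg0]]].
  assert (Hg00 : g0 <> 0).
  { intro E. subst g0. apply Hm1. apply Hcop; [|apply div_refl]. exists q0. rewrite EP0. ring. }
  assert (Gg0 : residue g0) by (exists 1, q0; rewrite EP0; ring).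
  destruct (residue_bounded g0 Hg0 Gg0) as [s0 [q1 [Hs0 [Hq1 E0]]]].
  destruct (delta0_least (fand (fnot (feq (tvar 0) tzero)) (fand (flt (tvar 0) (tvar 1))
       (fbex (tvar 1) (fbex (tmul (tvar 0) (tvar 3))
          (feq (tmul (tvar 1) (tvar 4)) (tadd (tmul (tvar 0) (tvar 3)) (tvar 2)))))))
     (scons m (scons P env0))
     (fun g => g <> 0 /\ g < m /\ exists s, s <= m /\ exists q, q <= s * P /\ s * P = q * m + g))
    with (a := g0) as [g [[Hg0' [Hgm [s [_ [q [_ Hsq]]]]]] Hmin]].
  - simpl; tauto.
  - intro x. cbn [sat]. rewrite sat_lt. cbn [teval scons]. reflexivity.
  - split; auto. split; auto. exists s0. split; auto. exists q1. auto.
  - destruct (least_residue_divides g Hg0' Hgm (ex_intro _ s (ex_intro _ q Hsq))) as [Hdm HdP].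
    { intros r Hr0 Hrm Gr. destruct (residue_bounded r Hrm Gr) as [s2 [q2 [H1 [H2 H3]]]].
      apply Hmin. split; auto. split; auto. exists s2. split; auto. exists q2. auto. }
    assert (g = 1) by (apply Hcop; auto). subst g. exists s, q. exact Hsq.
Qed.

End ModInverse.

Lemma crt_step : forall P m a c : M, m <> 0 -> coprime P m -> a < m ->
  exists t q, c + t * P = q * m + a.
Proof.
  intros P m a c Hm0 Hcop Ha.
  destruct (classic (m = 1)) as [->|Hm1].
  - assert (a = 0) as ->. { apply le_0_eq. apply lt_succ_r. rewrite add_0_l. auto. }
    exists 0, c. ring.
  - destruct (mod_inverse_exists P m Hm0 Hm1 Hcop) as [s [q0 E]].
    destruct (pred_exists m Hm0) as [m1 Hm1e].
    exists ((a + m1 * c) * s), (c + (a + m1 * c) * q0).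
    replace (c + (a + m1 * c) * s * P) with (c + (a + m1 * c) * (s * P)) by ring.
    rewrite E, Hm1e. ring.
Qed.

Lemma common_multiple_exists : forall u : M, exists D, D <> 0 /\ forall k, k <= u -> k <> 0 -> divides k D.
Proof.
  induct_sigma1_sat (fex (fand (fnot (feq (tvar 0) tzero))
          (fball (tvar 1) (fimp (fnot (feq (tvar 0) tzero)) (fdvd (tvar 0) (tvar 1)))))) env0.
  - exists 1. split; [apply one_neq_0|]. intros k Hk Hk0. exfalso. apply Hk0. apply le_0_eq; auto.
  - intros u [D [HD H]]. exists (D * (u + 1)). split.
    + intro E. apply mul_eq_0 in E as [E|E]; [auto| symmetry in E; exact (zero_neq_succ _ E)].
    + intros k Hk Hk0. apply le_succ_cases in Hk as [Hk| ->].
      * apply div_mul_r. auto.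
      * apply div_mul_l. apply div_refl.
Qed.

Lemma modulus_coprime : forall D u i j : M,
  (forall k, k <= u -> k <> 0 -> divides k D) -> i < j -> j <= u ->
  coprime (modulus D i) (modulus D j).
Proof.
  intros D u i j HD Hij Hju e He1 He2. apply NNPP. intro Hne.
  assert (He0 : e <> 0).
  { intro E. subst. destruct He1 as [k Hk]. rewrite mul_0_l in Hk. symmetry in Hk.
    exact (modulus_neq0 D i Hk). }
  destruct (prime_divisor_exists e He0 Hne) as [p [Hp Hpe]].
  destruct (prime_neq p Hp) as [Hp0 Hp1].
  apply lt_sub in Hij as [dl Edl]. subst j.
  assert (H1 : divides p ((dl + 1) * D)).
  { apply (div_sub _ (modulus D i)); [|eapply div_trans; eauto].
    replace (modulus D i + (dl + 1) * D) with (modulus D (i + dl + 1)) by (unfold modulus; ring).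
    eapply div_trans; eauto. }
  assert (H2 : divides p D).
  { destruct (prime_div_mul _ _ _ Hp H1) as [H|H]; auto.
    eapply div_trans; [exact H|]. apply HD.
    - eapply le_trans; [|exact Hju]. rewrite <- add_assoc. apply le_add_l.
    - intro E. symmetry in E. exact (zero_neq_succ _ E). }
  apply Hp1. apply div_one. apply (div_sub _ ((i + 1) * D)).
  - replace ((i + 1) * D + 1) with (modulus D i) by (unfold modulus; ring). exact (div_trans _ _ _ Hpe He1).
  - apply div_mul_l. auto.
Qed.

(* Stage [j] of extending the sequence coded by [(c, d)] on [0..n] by [w] at [n + 1]:
   [c'] codes the new sequence on the positions [<= j] and [P] is the product of their
   moduli. All quantifiers are bounded so that the invariant is [Delta_0] in [c', P]. *)
Definition crt_stage (n c d w D : M) (j : M) : Prop :=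
  exists c', exists P, ~ P = 0 /\
   ((forall k, k <= n + 1 -> j < k -> forall e, e <= P -> divides e P -> divides e (modulus D k) -> e = 1) /\
   ((forall i, i <= j -> i <= n + 1 -> divides (modulus D i) P) /\
   ((forall i, i <= j -> i <= n -> forall v, v <= c -> godel_beta c d i v -> godel_beta c' D i v) /\
    (n + 1 <= j -> godel_beta c' D (n + 1) w)))).


Lemma crt_stage_form_sigma1 : isSigma1 crt_stage_form.
Proof. unfold crt_stage_form. simpl. tauto. Qed.

Lemma sat_crt_stage_form (env : nat -> M) n c d w D j :
  sat (scons j (scons n (scons c (scons d (scons w (scons D env)))))) crt_stage_form <->
  crt_stage n c d w D j.
Proof. unfold crt_stage_form, crt_stage. satsimp. reflexivity. Qed.

Lemma coprime_of_bounded P m : P <> 0 ->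
  (forall e, e <= P -> divides e P -> divides e m -> e = 1) -> coprime P m.
Proof. intros HP H e H1 H2. apply H; auto. apply div_le; auto. Qed.

Section CRTStages.
Variables n c d w D u : M.
Hypothesis HD0 : D <> 0.
Hypothesis HD : forall k, k <= u -> k <> 0 -> divides k D.
Hypothesis Hcu : c < u.
Hypothesis Hwu : w < u.
Hypothesis Hnu : n + 1 <= u.

Lemma lt_modulus_of_lt_bound : forall i v, v < u -> v < modulus D i.
Proof.
  assert (Hud : u <= D).
  { apply div_le; auto. apply HD; [apply le_refl|]. intro E; subst u. eapply not_lt_0; eauto. }
  intros i v Hv. eapply lt_le_trans; [exact Hv|]. eapply le_trans; [exact Hud|].
  unfold modulus. eapply le_trans; [|apply le_add_l]. rewrite mul_comm. apply le_mul_r.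
  intro E. symmetry in E. exact (zero_neq_succ _ E).
Qed.

Lemma stage_moduli_coprime : forall i j, i < j -> j <= n + 1 -> coprime (modulus D i) (modulus D j).
Proof. intros i j Hij Hj. apply (modulus_coprime D u); auto. eapply le_trans; eauto. Qed.

Lemma crt_stage_0 : crt_stage n c d w D 0.
Proof.
  destruct (godel_beta_total c d 0) as [a0 Ha0].
  assert (Ha0u : a0 < u) by (eapply le_lt_trans; [eapply godel_beta_le; eauto| auto]).
  exists a0, (modulus D 0). split; [apply modulus_neq0|]. split; [|split; [|split]].
  - intros k Hk H0k e He H1 H2. apply (stage_moduli_coprime 0 k); auto.
  - intros i Hi _. apply le_0_eq in Hi. subst. apply div_refl.
  - intros i Hi _ v _ Hv. apply le_0_eq in Hi. subst.
    rewrite (godel_beta_functional _ _ _ _ _ Hv Ha0). apply godel_beta_small.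
    apply lt_modulus_of_lt_bound; auto.
  - intro H. apply le_0_eq in H. symmetry in H. destruct (zero_neq_succ _ H).
Qed.

Lemma stage_entry j : j + 1 <= n + 1 -> exists a, a < u /\
  (j + 1 <= n -> forall v, godel_beta c d (j + 1) v -> v = a) /\ (j + 1 = n + 1 -> a = w).
Proof.
  intro Hjn. destruct (classic (j + 1 <= n)) as [H|H].
  - destruct (godel_beta_total c d (j + 1)) as [a Ha]. exists a. split; [|split].
    + eapply le_lt_trans; [eapply godel_beta_le; eauto| auto].
    + intros _ v Hv. eapply godel_beta_functional; eauto.
    + intro E. exfalso. rewrite E in H. apply (lt_not_le n (n + 1)); auto.
      apply lt_succ_r, le_refl.
  - exists w. split; auto. split; [tauto|auto].
Qed.

(* The new code is [c' + t P], with [t] given by the Chinese remainder theorem. *)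
Lemma crt_stage_succ j : crt_stage n c d w D j -> crt_stage n c d w D (j + 1).
Proof.
  intros [c' [P [HP0 [C1 [C2 [C3 C4]]]]]].
  destruct (le_lt_dec (j + 1) (n + 1)) as [Hjn|Hjn].
  - destruct (stage_entry j Hjn) as [a [Hau [Ht1 Ht2]]].
    assert (HcopP : coprime P (modulus D (j + 1))).
    { apply coprime_of_bounded; auto. apply C1; auto. apply lt_succ_r, le_refl. }
    destruct (crt_step P (modulus D (j + 1)) a c' (modulus_neq0 _ _) HcopP
      (lt_modulus_of_lt_bound _ _ Hau)) as [t [q Eq]].
    exists (c' + t * P), (P * modulus D (j + 1)). split; [|split; [|split; [|split]]].
    + intro E. apply mul_eq_0 in E as [E|E]; auto. exact (modulus_neq0 _ _ E).
    + intros k Hk Hjk e He H1 H2.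
      assert (Hjk' : j < k) by (eapply lt_trans; [apply lt_succ_r, le_refl| exact Hjk]).
      apply (coprime_mul P (modulus D (j + 1)) (modulus D k)
        (coprime_of_bounded P _ HP0 (C1 k Hk Hjk')) (stage_moduli_coprime (j + 1) k Hjk Hk)); auto.
    + intros i Hi Hin. apply le_succ_cases in Hi as [Hi| ->].
      * apply div_mul_r. auto.
      * apply div_mul_l. apply div_refl.
    + intros i Hi Hin v Hvc Hv. apply le_succ_cases in Hi as [Hi| ->].
      * apply godel_beta_shift; auto. apply C2; auto. eapply le_trans; [exact Hin|apply le_add_r].
      * rewrite (Ht1 Hin v Hv). apply (godel_beta_intro _ _ _ _ q); auto using lt_modulus_of_lt_bound.
    + intro Hnj. apply le_succ_cases in Hnj as [Hnj|Hnj].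
      * apply godel_beta_shift; auto. apply C2; auto. apply le_refl.
      * rewrite Hnj. rewrite <- (Ht2 (eq_sym Hnj)). apply (godel_beta_intro _ _ _ _ q); auto using lt_modulus_of_lt_bound.
  - assert (Hnj : n + 1 <= j) by (apply lt_succ_r; auto).
    exists c', P. split; auto. split; [|split; [|split]].
    + intros k Hk Hjk. apply C1; auto. eapply lt_trans; [apply lt_succ_r, le_refl|exact Hjk].
    + intros i Hi Hin. apply C2; auto. eapply le_trans; eauto.
    + intros i Hi Hin. apply C3; auto. eapply le_trans; [exact Hin|].
      eapply le_trans; [apply le_add_r|exact Hnj].
    + intros _. apply C4; auto.
Qed.

Lemma crt_stage_all : forall j, crt_stage n c d w D j.
Proof.
  apply (sigma1_ind crt_stage_form (scons n (scons c (scons d (scons w (scons D env0)))))).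
  - exact crt_stage_form_sigma1.
  - intro; apply sat_crt_stage_form.
  - exact crt_stage_0.
  - exact crt_stage_succ.
Qed.

End CRTStages.

Lemma godel_beta_extend : forall c d n w : M, exists c' D,
  (forall i v, i <= n -> godel_beta c d i v -> godel_beta c' D i v) /\ godel_beta c' D (n + 1) w.
Proof.
  intros c d n w.
  set (u := c + w + n + 1).
  destruct (common_multiple_exists u) as [D [HD0 HD]].
  assert (Hcu : c < u).
  { unfold u. apply lt_succ_r. eapply le_trans; [apply (le_add_r c w)|apply le_add_r]. }
  assert (Hwu : w < u).
  { unfold u. apply lt_succ_r. eapply le_trans; [apply (le_add_l w c)|apply le_add_r]. }
  assert (Hnu : n + 1 <= u).
  { unfold u. apply le_add_mono; [apply le_add_l|apply le_refl]. }
  destruct (crt_stage_all n c d w D u HD0 HD Hcu Hwu Hnu (n + 1)) as [c' [P [_ [_ [_ [C3 C4]]]]]].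
  exists c', D. split.
  - intros i v Hi Hv. apply C3; auto.
    + eapply le_trans; [exact Hi|apply le_add_r].
    + eapply godel_beta_le; eauto.
  - apply C4. apply le_refl.
Qed.

(* [(c, D)] codes a sequence [x^0, ..., x^y] ending in [z]. *)
Definition exp_graph (x y z : M) : Prop :=
  exists c, exists D, godel_beta c D 0 1 /\
   ((forall i, i <= y -> i < y -> exists v, v <= c /\ (godel_beta c D i v /\ godel_beta c D (i + 1) (v * x))) /\
    godel_beta c D y z).


Lemma exp_form_sigma1 : isSigma1 exp_form.
Proof. unfold exp_form. simpl. tauto. Qed.

Lemma sat_exp_form : forall (env : nat -> M) x y z,
  sat (scons z (scons y (scons x env))) exp_form <-> exp_graph x y z.
Proof. intros. unfold exp_form. satsimp. reflexivity. Qed.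

Lemma one_lt_modulus_1_0 : 1 < modulus 1 0.
Proof. unfold modulus. replace (1 + (0 + 1) * 1) with (1 + 1) by ring. apply lt_succ_r, le_refl. Qed.

Lemma exp_graph_total : forall x y, exists z, exp_graph x y z.
Proof.
  intro x.
  match goal with |- forall z, @?P z =>
    apply (sigma1_ind (fex exp_form) (scons x env0) P); [simpl; tauto | |  | ] end.
  - intro y. cbn [sat]. setoid_rewrite sat_exp_form. reflexivity.
  - exists 1, 1, 1. split; [apply godel_beta_small, one_lt_modulus_1_0|]. split.
    + intros i _ Hi. exfalso. exact (not_lt_0 _ Hi).
    + apply godel_beta_small, one_lt_modulus_1_0.
  - intros y [z [c [D [H0 [Hs Hy]]]]].
    destruct (godel_beta_extend c D y (z * x)) as [c' [D' [Tr Hn]]].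
    exists (z * x), c', D'. split; [apply Tr; auto using le_0_l|]. split; auto.
    intros i _ Hi. apply lt_succ_r in Hi.
    destruct (classic (i = y)) as [->|Hne].
      * exists z. split; [eapply godel_beta_le; apply Tr; eauto using le_refl|]. split; auto.
      * assert (Hlt : i < y) by (split; auto).
        destruct (Hs i Hi Hlt) as [v [_ [Hv1 Hv2]]]. exists v.
        assert (Hv1' : godel_beta c' D' i v) by (apply Tr; auto).
        split; [eapply godel_beta_le; eauto|]. split; auto. apply Tr; auto.
        apply (proj1 (lt_iff_succ_le i y)); auto.
Qed.

Lemma exp_graph_unique : forall x y z z', exp_graph x y z -> exp_graph x y z' -> z = z'.
Proof.
  intros x y z z' [c [D [H0 [Hs Hy]]]] [c' [D' [H0' [Hs' Hy']]]].
  assert (G : forall i, i <= y -> forall v, v <= c -> forall v', v' <= c' ->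
              godel_beta c D i v -> godel_beta c' D' i v' -> v = v').
  { match goal with |- forall z, @?P z =>
      apply (sigma1_ind (fimp (fle (tvar 0) (tvar 1)) (fball (tvar 2) (fball (tvar 5)
          (fimp (fbeta (tvar 4) (tvar 5) (tvar 2) (tvar 1))
             (fimp (fbeta (tvar 6) (tvar 7) (tvar 2) (tvar 0)) (feq (tvar 1) (tvar 0)))))))
         (scons y (scons c (scons D (scons c' (scons D' env0))))) P);
      [simpl; tauto | intro; satsimp; reflexivity | |] end.
    - intros _ v _ v' _ Hv Hv'. rewrite (godel_beta_functional _ _ _ _ _ Hv H0), (godel_beta_functional _ _ _ _ _ Hv' H0'). auto.
    - intros i IH Hi v _ v' _ Hv Hv'.
      assert (Hlt : i < y) by (apply lt_iff_succ_le; auto).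
      destruct (Hs i (lt_le _ _ Hlt) Hlt) as [w [Hw [Hw1 Hw2]]].
      destruct (Hs' i (lt_le _ _ Hlt) Hlt) as [w' [Hw' [Hw1' Hw2']]].
      rewrite (IH (lt_le _ _ Hlt) w Hw w' Hw' Hw1 Hw1') in Hw2.
      rewrite (godel_beta_functional _ _ _ _ _ Hv Hw2), (godel_beta_functional _ _ _ _ _ Hv' Hw2'). reflexivity. }
  apply (G y (le_refl y)); auto; eapply godel_beta_le; eauto.
Qed.

Lemma exp_graph_succ : forall x y z, exp_graph x (y + 1) z -> exists w, exp_graph x y w /\ z = w * x.
Proof.
  intros x y z [c [D [H0 [Hs Hy]]]].
  assert (Hyy : y < y + 1) by (apply lt_succ_r, le_refl).
  destruct (Hs y (lt_le _ _ Hyy) Hyy) as [v [_ [Hv1 Hv2]]].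
  exists v. split.
  - exists c, D. split; auto. split; auto.
    intros i Hi Hlt. apply Hs; auto. eapply le_trans; [exact Hi|apply lt_le; auto].
    eapply lt_trans; eauto.
  - eapply godel_beta_functional; eauto.
Qed.

Lemma exp_graph_zero : forall x, exp_graph x 0 1.
Proof.
  intro x. exists 1, 1. split; [apply godel_beta_small, one_lt_modulus_1_0|]. split.
  + intros i _ Hi. exfalso. exact (not_lt_0 _ Hi).
  + apply godel_beta_small, one_lt_modulus_1_0.
Qed.

Definition exp_fun (x y : M) : M := proj1_sig (constructive_indefinite_description _ (exp_graph_total x y)).

Lemma exp_fun_graph : forall x y, exp_graph x y (exp_fun x y).
Proof. intros x y. unfold exp_fun. destruct (constructive_indefinite_description _ _). auto. Qed.

Lemma exp_fun_definable : IsDefinableExp M exp_fun.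
Proof.
  split; [|split].
  - exists exp_form. split; [apply exp_form_sigma1|]. intros env x y z. rewrite sat_exp_form. split.
    + intro H. eapply exp_graph_unique; [apply exp_fun_graph|exact H].
    + intros <-. apply exp_fun_graph.
  - intro x. eapply exp_graph_unique; [apply exp_fun_graph|apply exp_graph_zero].
  - intros x y. destruct (exp_graph_succ x y _ (exp_fun_graph x (y + 1))) as [w [Hw E]].
    rewrite E. f_equal. eapply exp_graph_unique; [exact Hw|apply exp_fun_graph].
Qed.

Fixpoint npow (u : M) (k : nat) : M := match k with O => 1 | S k' => npow u k' * u end.

Lemma npow_add : forall u k l, npow u (k + l) = npow u k * npow u l.
Proof. intros u k l. induction l as [|l IH]; simpl. rewrite Nat.add_0_r. ring.
  rewrite Nat.add_succ_r. simpl. rewrite IH. ring. Qed.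

Lemma npow_mul : forall u v k, npow (u * v) k = npow u k * npow v k.
Proof. intros u v k. induction k as [|k IH]; simpl. ring. rewrite IH. ring. Qed.

Lemma npow_npow : forall u k l, npow (npow u k) l = npow u (k * l).
Proof. intros u k l. induction l as [|l IH]; simpl. rewrite Nat.mul_0_r. reflexivity.
  rewrite IH, Nat.mul_succ_r, npow_add. reflexivity. Qed.

Lemma npow_le_base : forall u v k, u <= v -> npow u k <= npow v k.
Proof. intros u v k H. induction k; simpl. apply le_refl. apply le_mul_mono; auto. Qed.

Lemma npow_neq0 : forall u k, u <> 0 -> npow u k <> 0.
Proof. intros u k H. induction k; simpl. apply one_neq_0. intro E. apply mul_eq_0 in E. tauto. Qed.

Lemma npow_lt_base : forall u v k, u < v -> npow u (S k) < npow v (S k).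
Proof.
  intros u v k H. simpl. assert (Hv : v <> 0).
  { intro E. subst. eapply not_lt_0; eauto. }
  eapply le_lt_trans; [apply le_mul_mono; [apply npow_le_base, lt_le; eauto| apply le_refl]|].
  rewrite !(mul_comm (npow v k)). apply lt_mul_mono; auto. apply npow_neq0; auto.
Qed.

Lemma npow_ge1 : forall u k, 1 <= u -> 1 <= npow u k.
Proof. intros u k H. induction k; simpl. apply le_refl.
  rewrite <- (mul_1_l 1) at 1. apply le_mul_mono; auto. Qed.

Lemma npow_mono_exp : forall u k l, 1 <= u -> (k <= l)%nat -> npow u k <= npow u l.
Proof.
  intros u k l H Hkl. replace l with (k + (l - k))%nat by lia. rewrite npow_add.
  apply le_trans with (npow u k * 1); [rewrite mul_comm, mul_1_l; apply le_refl|].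
  apply le_mul_mono; [apply le_refl | apply npow_ge1; auto].
Qed.

Lemma div_npow : forall u k, (1 <= k)%nat -> divides u (npow u k).
Proof. intros u k H. destruct k; [lia|]. simpl. apply div_mul_l, div_refl. Qed.

Lemma prime_div_npow : forall p u k, prime p -> divides p (npow u k) -> divides p u.
Proof.
  intros p u k Hp. induction k; simpl; intro H.
  - exfalso. apply (proj2 (prime_neq p Hp)). apply div_one. auto.
  - destruct (prime_div_mul _ _ _ Hp H); auto.
Qed.

Lemma numeral_S : forall n, (numeral (S n) : M) = numeral n + 1.
Proof. reflexivity. Qed.

Lemma numeral_add : forall m n, (numeral (m + n) : M) = numeral m + numeral n.
Proof. intros m n. induction m; simpl plus. unfold numeral; simpl. ring.
  rewrite !numeral_S, IHm. ring. Qed.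

Lemma numeral_mul : forall m n, (numeral (m * n) : M) = numeral m * numeral n.
Proof. intros m n. induction m; simpl mult. unfold numeral; simpl. ring.
  rewrite numeral_add, numeral_S, IHm. ring. Qed.

Lemma natmul_eq : forall n (u : M), natmul n u = numeral n * u.
Proof. intros n u. induction n; simpl. unfold numeral; simpl. ring.
  rewrite IHn, numeral_S. ring. Qed.

Lemma numeral_le : forall m n, (m <= n)%nat -> (numeral m : M) <= numeral n.
Proof. intros m n H. replace n with (m + (n - m))%nat by lia. rewrite numeral_add. apply le_add_r. Qed.

Lemma numeral_lt_inv : forall m n, (numeral m : M) < numeral n -> (m < n)%nat.
Proof. intros m n H. destruct (Nat.lt_ge_cases m n); auto. exfalso.
  apply (lt_not_le _ _ H). apply numeral_le. auto. Qed.

Lemma lt_numeral : forall n (x : M), x < numeral n -> exists k, (k < n)%nat /\ x = numeral k.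
Proof.
  induction n; intros x H.
  - exfalso. exact (not_lt_0 x H).
  - rewrite numeral_S in H. apply lt_succ_r in H. destruct (classic (x = numeral n)) as [->|Hne].
    + exists n. split; auto.
    + destruct (IHn x (conj H Hne)) as [k [Hk ->]]. exists k. split; auto.
Qed.

Lemma npow_numeral : forall m k, npow (numeral m) k = numeral (m ^ k).
Proof. intros m k. induction k. unfold numeral; simpl; ring. cbn [npow]. rewrite IHk, Nat.pow_succ_r', numeral_mul. apply mul_comm. Qed.

Lemma numeral_2 : (numeral 2 : M) = 1 + 1.
Proof. unfold numeral. simpl. ring. Qed.

Lemma exp_fun_numeral : forall x k, exp_fun x (numeral k) = npow x k.
Proof.
  intros x k. destruct exp_fun_definable as [_ [H0 HS]]. induction k; simpl.
  - apply H0.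
  - rewrite numeral_S, HS, IHk. reflexivity.
Qed.

Lemma le_mul_ge1 : forall v w, 1 <= w -> v <= v * w.
Proof. intros v w H. apply le_trans with (v * 1); [rewrite mul_comm, mul_1_l; apply le_refl|].
  apply le_mul_mono; auto using le_refl. Qed.

Lemma coprime_1_l : forall a : M, coprime 1 a.
Proof. intros a d H _. apply div_one; auto. Qed.

(* A stand-in for the radical of [n] that need not be computed. *)
Definition rad_cover (n P : M) : Prop :=
  P <> 0 /\ divides P n /\ forall p, prime p -> divides p n -> divides p P.

Lemma rad_cover_npow_mul X x N k : X <> 0 -> divides x X -> (1 <= N)%nat ->
  rad_cover (npow X N * npow x k) X.
Proof.
  intros HX0 HxX HN. split; [exact HX0|]. split; [apply div_mul_r, div_npow; exact HN|].
  intros p Hp Hdiv. destruct (prime_div_mul _ _ _ Hp Hdiv) as [H|H].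
  - eapply prime_div_npow; eauto.
  - eapply div_trans; [|exact HxX]. eapply prime_div_npow; eauto.
Qed.

Lemma rad_le_cover_mul m n r Pm Pn : isRad (m * n) r ->
  rad_cover m Pm -> rad_cover n Pn -> r <= Pm * Pn.
Proof.
  intros [_ [_ [_ Hmin]]] [Pm0 [Pm_m Pm_p]] [Pn0 [Pn_n Pn_p]]. apply Hmin.
  - apply lt_0_neq. intro E. apply mul_eq_0 in E. tauto.
  - apply div_mul_mono; assumption.
  - intros p Hp Hpmn. destruct (prime_div_mul _ _ _ Hp Hpmn) as [H|H].
    + apply div_mul_r; auto.
    + apply div_mul_l; auto.
Qed.

Lemma npow_16_le_of_sq_le P c : npow P 2 <= c -> npow P 16 <= npow c 8.
Proof. intro H. change 16%nat with (2 * 8)%nat. rewrite <- npow_npow. apply npow_le_base, H. Qed.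

Lemma cover_product_bound Pa Pb c : npow Pa 2 <= c -> npow Pb 2 <= c ->
  npow Pa 16 <= c \/ npow Pb 16 <= c -> npow (Pa * Pb) 16 <= npow c 9.
Proof.
  intros Ha2 Hb2 Hbig. rewrite npow_mul. change (npow c 9) with (npow c 8 * c).
  apply npow_16_le_of_sq_le in Ha2. apply npow_16_le_of_sq_le in Hb2.
  destruct Hbig as [Ha|Hb].
  - rewrite mul_comm. apply le_mul_mono; assumption.
  - apply le_mul_mono; assumption.
Qed.

(* From [c^3 < m r^4] and [r^16 <= c^9]: [c^12 < m^4 r^16 <= m^4 c^9], so [c^3 < m^4]. *)
Lemma abc_height_bound (c S r : M) (m n : nat) : 1 <= c -> r <= S ->
  c * c * c < natmul m (r * r * (r * r)) -> npow S 16 <= npow c 9 -> numeral n <= c -> (n < m ^ 4)%nat.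
Proof.
  intros Hc1 HrS Habc HS Hn.
  assert (H1 : npow c 3 < numeral m * npow S 4).
  { eapply lt_le_trans.
    - replace (npow c 3) with (c * c * c) by (simpl; ring). rewrite natmul_eq in Habc. exact Habc.
    - apply le_mul_mono; [apply le_refl|]. replace (r * r * (r * r)) with (npow r 4) by (simpl; ring).
      apply npow_le_base; auto. }
  apply (npow_lt_base _ _ 3) in H1.
  rewrite npow_npow, npow_mul, npow_npow, npow_numeral in H1. simpl (3 * 4)%nat in H1. simpl (4 * 4)%nat in H1.
  assert (H2 : npow c 3 * npow c 9 < numeral (m ^ 4) * npow c 9).
  { rewrite <- npow_add. simpl (3 + 9)%nat. eapply lt_le_trans; [exact H1|].
    apply le_mul_mono; auto using le_refl. }
  apply lt_mul_cancel in H2.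
  apply numeral_lt_inv. eapply le_lt_trans; [exact Hn|]. eapply le_lt_trans; [|exact H2].
  replace c with (npow c 1) at 1 by (simpl; ring). apply npow_mono_exp; auto.
Qed.

(* ABC applied to the triple [(b, 1, b + 1)]. *)
Lemma catalan_abc_bound K N c b Pc Pb : ABC_4_3 M K -> c = b + 1 -> b <> 0 ->
  rad_cover c Pc -> rad_cover b Pb -> npow Pc 2 <= c -> npow Pb 2 <= b ->
  npow Pc 16 <= c \/ npow Pb 16 <= b -> numeral N <= c -> (N < (K * K * K) ^ 4)%nat.
Proof.
  intros Habc Ec Hb0 Hc_cov Hb_cov Hc2 Hb2 Hbig HN.
  assert (Hc0 : c <> 0) by (rewrite Ec; intro E; symmetry in E; exact (zero_neq_succ _ E)).
  assert (Hbc : b <= c) by (rewrite Ec; apply le_add_r).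
  destruct (rad_exists (b * 1 * c)) as [r Hr].
  { intro E. apply mul_eq_0 in E as [E|E]; [apply mul_eq_0 in E as [E|E]|]; auto.
    exact (one_neq_0 E). }
  assert (Hr_abc := Habc b 1 c (proj2 (lt_0_neq _) Hb0) lt_0_1 (proj2 (lt_0_neq _) Hc0)
    (coprime_1 b) ltac:(rewrite Ec; apply coprime_S) (coprime_1_l c) (eq_sym Ec) r Hr).
  replace (b * 1) with b in Hr by ring.
  apply (abc_height_bound c (Pb * Pc) r); auto.
  - apply le_neq0, Hc0.
  - apply (rad_le_cover_mul b c); assumption.
  - rewrite mul_comm. apply cover_product_bound; [exact Hc2 | eapply le_trans; eauto |].
    destruct Hbig; [left | right; eapply le_trans]; eauto.
Qed.

Section ExpPrimeModel.
Variable A : M -> Prop.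
Variable e : M -> M -> M.
Hypothesis HE : ExpPrime M A e.

Lemma A_0 : A 0. Proof. apply HE. Qed.
Lemma A_1 : A 1. Proof. apply HE. Qed.
Lemma A_add : forall u v, A u -> A v -> A (u + v). Proof. apply HE. Qed.
Lemma A_le : forall u v, A u -> A v -> u <= v -> exists z, A z /\ u + z = v.
Proof. intros u v Hu Hv H. destruct HE as [_ [HP _]]. apply HP; auto. Qed.
Lemma A_div : forall n, (0 < n)%nat -> forall u, A u -> exists q, A q /\ natmul n q <= u /\ u < natmul n (q + 1).
Proof. destruct HE as [_ [HP _]]. apply HP. Qed.

Lemma e_0 : forall x, e x 0 = 1.
Proof. intro x. destruct HE as [_ [_ [H1 _]]]. apply H1; auto using A_0. Qed.
Lemma e_1 : forall x, e x 1 = x. Proof. apply HE. Qed.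
Lemma e_add : forall x u v, A u -> A v -> e x (u + v) = e x u * e x v. Proof. apply HE. Qed.
Lemma e_neq0 : forall x u, A u -> x <> 0 -> e x u <> 0. Proof. apply HE. Qed.

Lemma A_numeral : forall k, A (numeral k).
Proof. induction k. apply A_0. rewrite numeral_S. apply A_add; auto using A_1. Qed.

Lemma A_natmul : forall n q, A q -> A (natmul n q).
Proof. intros n q Hq. induction n; simpl. apply A_0. apply A_add; auto. Qed.

Lemma e_numeral : forall x k, e x (numeral k) = npow x k.
Proof. intros x k. induction k. apply e_0. rewrite numeral_S, e_add, IHk, e_1; auto using A_numeral, A_1. Qed.

Lemma e_natmul : forall x n q, A q -> e x (natmul n q) = npow (e x q) n.
Proof. intros x n q Hq. induction n; simpl. apply e_0. rewrite e_add, IHn; auto using A_natmul. Qed.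

Lemma divides_e : forall x q, A q -> q <> 0 -> divides x (e x q).
Proof.
  intros x q Hq Hq0. destruct HE as [_ [HP _]]. destruct (proj1 (proj2 HP) q Hq Hq0) as [q' [Hq' ->]].
  rewrite e_add, e_1; auto using A_1. apply div_mul_l, div_refl.
Qed.

Lemma exponent_split N u : (0 < N)%nat -> A u ->
  exists q k, A q /\ (k < N)%nat /\ u = natmul N q + numeral k.
Proof.
  intros HN Hu. destruct (A_div N HN u Hu) as [q [Hq [H1 H2]]].
  destruct (A_le _ _ (A_natmul N q Hq) Hu H1) as [r [_ Er]].
  assert (Hrn : r < numeral N).
  { rewrite <- Er, !natmul_eq in H2.
    apply (lt_add_cancel _ _ (numeral N * q)). rewrite !(add_comm _ (numeral N * q)).
    replace (numeral N * q + numeral N) with (numeral N * (q + 1)) by ring. exact H2. }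
  destruct (lt_numeral N r Hrn) as [k [Hk ->]]. exists q, k. auto.
Qed.

(* Write [u = N q + k]; for [q = 0] the exponent is standard, otherwise
   [e x u = X^N x^k] with [X = e x q], so [X] covers the radical and [X^N <= e x u]. *)
Lemma e_standard_or_large N x u : (16 <= N)%nat -> A u -> 1 < x -> 1 < u ->
  exists P, rad_cover (e x u) P /\ npow P 2 <= e x u /\
    ((exists k, u = numeral k) \/ (npow P 16 <= e x u /\ numeral (2 ^ N) <= e x u)).
Proof.
  intros HN Hu Hx Hu1.
  assert (Hx2 : 1 + 1 <= x) by exact (proj1 (lt_iff_succ_le 1 x) Hx).
  assert (Hx0 : x <> 0) by exact (proj1 (lt_1_neq x Hx)).
  assert (Hx1 : 1 <= x) by (apply le_neq0; auto).
  destruct (exponent_split N u ltac:(lia) Hu) as [q [k [Hq [Hk Eu]]]].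
  destruct (classic (q = 0)) as [->|Hq0].
  - assert (Eu0 : u = numeral k) by (rewrite Eu, natmul_eq; ring).
    assert (Hk2 : (2 <= k)%nat).
    { destruct (Nat.lt_ge_cases k 2) as [H|H]; auto. exfalso.
      apply (lt_not_le _ _ Hu1). rewrite Eu0.
      replace (1 : M) with (@numeral M 1) by (unfold numeral; simpl; ring).
      apply numeral_le. lia. }
    rewrite Eu0, e_numeral. exists x. split; [|split].
    + replace (npow x k) with (npow x k * npow x 0) by (simpl; ring).
      apply rad_cover_npow_mul; auto using div_refl. lia.
    + apply npow_mono_exp; auto.
    + left. exists k. reflexivity.
  - set (X := e x q).
    assert (HX0 : X <> 0) by (apply e_neq0; auto).
    assert (HxX : divides x X) by (apply divides_e; auto).
    assert (HX1 : 1 <= X) by (eapply le_trans; [exact Hx1 | apply div_le; auto]).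
    assert (Ee : e x u = npow X N * npow x k).
    { rewrite Eu, e_add, e_natmul, e_numeral; auto using A_natmul, A_numeral. }
    assert (HXN : npow X N <= e x u) by (rewrite Ee; apply le_mul_ge1, npow_ge1; auto).
    exists X. split; [|split; [|right; split]].
    + rewrite Ee. apply rad_cover_npow_mul; auto. lia.
    + eapply le_trans; [|exact HXN]. apply npow_mono_exp; auto. lia.
    + eapply le_trans; [|exact HXN]. apply npow_mono_exp; auto.
    + eapply le_trans; [|exact HXN]. rewrite <- npow_numeral. apply npow_le_base.
      rewrite numeral_2. eapply le_trans; [exact Hx2 | apply div_le; auto].
Qed.

Lemma catalan_exponents_standard K x y a b : ABC_4_3 M K -> A a -> A b ->
  1 < x -> 1 < y -> 1 < a -> 1 < b -> e x a = e y b + 1 ->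
  (exists ka, a = numeral ka) /\ (exists kb, b = numeral kb).
Proof.
  intros Habc Ha Hb Hx Hy Ha1 Hb1 Heq.
  set (N := ((K * K * K) ^ 4 + 16)%nat).
  assert (HN : ~ (2 ^ N < (K * K * K) ^ 4)%nat).
  { pose proof (Nat.pow_gt_lin_r 2 N ltac:(lia)). unfold N in *. lia. }
  assert (Hb0 : e y b <> 0) by (apply e_neq0; auto; exact (proj1 (lt_1_neq y Hy))).
  assert (Hbc : e y b <= e x a) by (rewrite Heq; apply le_add_r).
  destruct (e_standard_or_large N x a ltac:(lia) Ha Hx Ha1) as [Pa [Pa_cov [Pa2 [Sa|[Pa16 Ha_big]]]]];
  destruct (e_standard_or_large N y b ltac:(lia) Hb Hy Hb1) as [Pb [Pb_cov [Pb2 [Sb|[Pb16 Hb_big]]]]];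
  [split; assumption | exfalso; apply HN .. ].
  all: apply (catalan_abc_bound K (2 ^ N) (e x a) (e y b) Pa Pb); auto.
  all: eapply le_trans; eauto.
Qed.

End ExpPrimeModel.

End ISigma1Model.

Theorem theorem5p2 :
  forall (K : nat) (B : LStruct),
    ISigma1 B -> ABC_4_3 B K -> CatalanExp B ->
    forall (A : B -> Prop) (e : B -> B -> B),
      ExpPrime B A e -> CatalanFor A e.
Proof.
  intros K B HI Habc Hcat A e HE x y a b Ha Hb Hx Hy Ha1 Hb1 Heq.
  destruct (catalan_exponents_standard B HI A e HE K x y a b Habc Ha Hb Hx Hy Ha1 Hb1 Heq)
    as [[ka ->] [kb ->]].
  apply (Hcat (exp_fun B HI) (exp_fun_definable B HI)); auto.
  rewrite !(exp_fun_numeral B HI). erewrite !e_numeral in Heq; eauto.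
Qed.
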